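(* Let $G$ be a group and let $(t_1,\ldots,t_n)\in G^n$ be an $n$-tuple such that $t_{i+1}=t_i^{-1}$ for some $i$. Let $H$ be the subgroup of $G$ generated by $t_1,\ldots,t_{i-1},t_{i+2},\ldots,t_n$. Then for every $h\in H$ the $n$-tuple $(t_1,\ldots,t_{i-1},ht_ih^{-1},ht_{i+1}h^{-1},t_{i+2},\ldots,t_n)$ is braid-equivalent to $(t_1,\ldots,t_n)$.
   Context: An elementary transformation (braid move) of an $n$-tuple $(t_1,\ldots,t_n)\in G^n$ is, for some $1\leq i\leq n-1$, either the replacement of $(t_i,t_{i+1})$ by $(t_it_{i+1}t_i^{-1},t_i)$ or by $(t_{i+1},t_{i+1}^{-1}t_it_{i+1})$, leaving the other entries unchanged. Two $n$-tuples are braid-equivalent if one is obtained from the other by a finite sequence of elementary transformations. *)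

From Stdlib Require Import List Relations.
Import ListNotations.

Record group := Group {
  gcar :> Type;
  gmul : gcar -> gcar -> gcar;
  ginv : gcar -> gcar;
  gone : gcar;
  gmulA : forall x y z, gmul x (gmul y z) = gmul (gmul x y) z;
  gmul1 : forall x, gmul x gone = x;
  g1mul : forall x, gmul gone x = x;
  gmulV : forall x, gmul x (ginv x) = gone;
  gVmul : forall x, gmul (ginv x) x = gone
}.

Arguments gmul {G} : rename.
Arguments ginv {G} : rename.
Arguments gone {G} : rename.

Inductive in_gen {G : group} (S : G -> Prop) : G -> Prop :=
  | gen_base : forall x, S x -> in_gen S x
  | gen_one : in_gen S gone
  | gen_mul : forall x y, in_gen S x -> in_gen S y -> in_gen S (gmul x y)
  | gen_inv : forall x, in_gen S x -> in_gen S (ginv x).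

Definition braid_step {G : group} (s t : list G) : Prop :=
  exists (l r : list G) (a b : G),
    s = l ++ a :: b :: r /\
    (t = l ++ gmul (gmul a b) (ginv a) :: a :: r \/
     t = l ++ b :: gmul (gmul (ginv b) a) b :: r).

Definition braid_equiv {G : group} (s t : list G) : Prop :=
  clos_refl_trans (list G) braid_step s t.

(** Adjacent entries [u; u^-1] can be slid past any entry [a] by two braid
    moves, and two further moves replace [a; u; u^-1] by
    [a; a u a^-1; (a u a^-1)^-1].  Sliding the pair next to a generator
    [x] of [H], conjugating by [x] and sliding it back shows that the set of
    [h] for which the statement holds for every [t] contains the generators;
    it is closed under products and inverses, hence contains [H]. *)
From Stdlib Require Import List Relations.
Import ListNotations.

Section GroupFacts.
Variable G : group.

Lemma ginvK (x : G) : ginv (ginv x) = x.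
Proof.
  rewrite <- (gmul1 G (ginv (ginv x))), <- (gVmul G x), gmulA, gVmul, g1mul.
  reflexivity.
Qed.

Lemma ginvM (x y : G) : ginv (gmul x y) = gmul (ginv y) (ginv x).
Proof.
  rewrite <- (g1mul G (ginv (gmul x y))).
  rewrite <- (gVmul G y) at 1.
  rewrite <- (g1mul G y) at 2.
  rewrite <- (gVmul G x).
  rewrite <- !gmulA, (gmulA _ x y), gmulV, gmul1.
  reflexivity.
Qed.

Lemma ginv1 : ginv (@gone G) = gone.
Proof. rewrite <- (g1mul G (ginv gone)). apply gmulV. Qed.

Definition gconj (h x : G) : G := gmul (gmul h x) (ginv h).

Lemma gconj1 (x : G) : gconj gone x = x.
Proof. unfold gconj. rewrite ginv1, gmul1, g1mul. reflexivity. Qed.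

Lemma gconjM (x y u : G) : gconj (gmul x y) u = gconj x (gconj y u).
Proof. unfold gconj. rewrite ginvM, !gmulA. reflexivity. Qed.

Lemma gconjVE (x u : G) : gconj (ginv x) u = gmul (gmul (ginv x) u) x.
Proof. unfold gconj. rewrite ginvK. reflexivity. Qed.

Lemma gconjK (x u : G) : gconj (ginv x) (gconj x u) = u.
Proof. rewrite <- gconjM, gVmul. apply gconj1. Qed.

Lemma gconjKV (x u : G) : gconj x (gconj (ginv x) u) = u.
Proof. rewrite <- gconjM, gmulV. apply gconj1. Qed.

Lemma gconjV (h x : G) : gconj h (ginv x) = ginv (gconj h x).
Proof. unfold gconj. rewrite !ginvM, ginvK, gmulA. reflexivity. Qed.

Lemma in_gen_sub (S T : G -> Prop) (h : G) :
  (forall x, S x -> T x) -> in_gen S h -> in_gen T h.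
Proof.
  intros ST Hh. induction Hh.
  - apply gen_base, ST. assumption.
  - apply gen_one.
  - apply gen_mul; assumption.
  - apply gen_inv; assumption.
Qed.

End GroupFacts.

Arguments gconj {G}.

Section Braids.
Variable G : group.

Lemma braid_step_sym (s t : list G) : braid_step s t -> braid_step t s.
Proof.
  intros (l & r & a & b & -> & [-> | ->]).
  - exists l, r, (gconj a b), a. split; [reflexivity |].
    right. rewrite <- gconjVE, gconjK. reflexivity.
  - exists l, r, b, (gmul (gmul (ginv b) a) b). split; [reflexivity |].
    left. rewrite <- gconjVE. change (l ++ a :: b :: r = l ++ gconj b (gconj (ginv b) a) :: b :: r).
    rewrite gconjKV. reflexivity.
Qed.

Lemma braid_equiv_sym {s t : list G} : braid_equiv s t -> braid_equiv t s.
Proof.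
  induction 1.
  - apply rt_step, braid_step_sym. assumption.
  - apply rt_refl.
  - eapply rt_trans; eassumption.
Qed.

Lemma braid_step_frame (L R s t : list G) :
  braid_step s t -> braid_step (L ++ s ++ R) (L ++ t ++ R).
Proof.
  intros (l & r & a & b & -> & Ht).
  exists (L ++ l), (r ++ R), a, b.
  split; [| destruct Ht as [-> | ->]; [left | right]];
    rewrite <- !app_assoc; reflexivity.
Qed.

Lemma braid_equiv_frame (L R : list G) {s t : list G} :
  braid_equiv s t -> braid_equiv (L ++ s ++ R) (L ++ t ++ R).
Proof.
  induction 1.
  - apply rt_step, braid_step_frame. assumption.
  - apply rt_refl.
  - eapply rt_trans; eassumption.
Qed.

Lemma braid_equiv_app_l (L : list G) {s t : list G} :
  braid_equiv s t -> braid_equiv (L ++ s) (L ++ t).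
Proof.
  intro Hst. rewrite <- (app_nil_r s), <- (app_nil_r t).
  apply braid_equiv_frame. exact Hst.
Qed.

Lemma braid_move_l (a b : G) : braid_equiv [a; b] [gconj a b; a].
Proof. apply rt_step. exists [], [], a, b. split; [reflexivity | left; reflexivity]. Qed.

Lemma braid_move_r (a b : G) : braid_equiv [a; b] [b; gconj (ginv b) a].
Proof.
  apply rt_step. exists [], [], a, b. split; [reflexivity |].
  right. rewrite gconjVE. reflexivity.
Qed.

Definition inv_pair (u : G) : list G := [u; ginv u].

Lemma braid_inv_pair_swap (a u : G) :
  braid_equiv ([a] ++ inv_pair u) (inv_pair u ++ [a]).
Proof.
  eapply rt_trans; [exact (braid_equiv_frame [] [ginv u] (braid_move_r a u)) |].
  eapply rt_trans; [exact (braid_equiv_frame [u] [] (braid_move_r _ (ginv u))) |].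
  cbn. rewrite ginvK, gconjKV. apply rt_refl.
Qed.

Lemma braid_inv_pair_conj (a u : G) :
  braid_equiv ([a] ++ inv_pair u) ([a] ++ inv_pair (gconj a u)).
Proof.
  eapply rt_trans; [exact (braid_equiv_frame [] [ginv u] (braid_move_l a u)) |].
  eapply rt_trans; [exact (braid_equiv_frame [gconj a u] [] (braid_move_l a (ginv u))) |].
  cbn. rewrite gconjV.
  exact (braid_equiv_sym (braid_inv_pair_swap a (gconj a u))).
Qed.

Lemma braid_inv_pair_slide (B : list G) (u : G) :
  braid_equiv (B ++ inv_pair u) (inv_pair u ++ B).
Proof.
  induction B as [| b B IH].
  - apply rt_refl.
  - eapply rt_trans; [exact (braid_equiv_app_l [b] IH) |].
    exact (braid_equiv_frame [] B (braid_inv_pair_swap b u)).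
Qed.

Lemma braid_inv_pair_conj_mem (B : list G) (x u : G) :
  In x B -> braid_equiv (B ++ inv_pair u) (B ++ inv_pair (gconj x u)).
Proof.
  intro Hx. destruct (in_split _ _ Hx) as (B1 & B2 & ->).
  assert (Hslide : forall v, braid_equiv ((B1 ++ x :: B2) ++ inv_pair v)
                                         (B1 ++ ([x] ++ inv_pair v) ++ B2)).
  { intro v. rewrite <- app_assoc.
    exact (braid_equiv_app_l B1 (braid_equiv_app_l [x] (braid_inv_pair_slide B2 v))). }
  eapply rt_trans; [apply Hslide |].
  eapply rt_trans; [exact (braid_equiv_frame B1 B2 (braid_inv_pair_conj x u)) |].
  apply braid_equiv_sym, Hslide.
Qed.

Lemma braid_inv_pair_conj_gen (W : list G) (h : G) :
  in_gen (fun x => In x W) h ->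
  forall u, braid_equiv (W ++ inv_pair u) (W ++ inv_pair (gconj h u)).
Proof.
  induction 1 as [x Hx | | x y _ IHx _ IHy | x _ IHx]; intro u.
  - apply braid_inv_pair_conj_mem. assumption.
  - rewrite gconj1. apply rt_refl.
  - rewrite gconjM. eapply rt_trans; [apply IHy | apply IHx].
  - rewrite <- (gconjKV G x u) at 1. apply braid_equiv_sym, IHx.
Qed.

Lemma braid_inv_pair_to_end (l r : list G) (u : G) :
  braid_equiv (l ++ inv_pair u ++ r) ((l ++ r) ++ inv_pair u).
Proof.
  rewrite <- app_assoc.
  exact (braid_equiv_app_l l (braid_equiv_sym (braid_inv_pair_slide r u))).
Qed.

End Braids.

Arguments inv_pair {G}.

Theorem lemma1p9 (G : group) (l r : list G) (t h : G) :
  in_gen (fun x : G => In x l \/ In x r) h ->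
  braid_equiv (l ++ t :: ginv t :: r)
              (l ++ gmul (gmul h t) (ginv h)
                   :: gmul (gmul h (ginv t)) (ginv h) :: r).
Proof.
  intro Hh.
  change (braid_equiv (l ++ inv_pair t ++ r)
                      (l ++ [gconj h t; gconj h (ginv t)] ++ r)).
  rewrite gconjV.
  eapply rt_trans; [apply braid_inv_pair_to_end |].
  eapply rt_trans; [| apply braid_equiv_sym, braid_inv_pair_to_end].
  apply braid_inv_pair_conj_gen.
  apply in_gen_sub with (S := fun x => In x l \/ In x r); [| exact Hh].
  intros x Hx. apply in_or_app. exact Hx.
Qed.
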